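(* Let $d,m\ge1$, $\nu>0$, $\boldsymbol{\xi},\mathbf{y}\in\mathbb{R}^d$, $\boldsymbol{\Omega}$ a $d\times d$ positive definite matrix and $\bar{\boldsymbol{\Gamma}}$ an $m\times m$ positive definite correlation matrix. Let $\mathbf{y}_*=(\mathbf{0}^\top,\mathbf{y}^\top)^\top$, $\boldsymbol{\xi}_*=(\mathbf{0}^\top,\boldsymbol{\xi}^\top)^\top\in\mathbb{R}^{m+d}$ and $\boldsymbol{\Omega}_*=\mathrm{diag}(\bar{\boldsymbol{\Gamma}},\boldsymbol{\Omega})$. Then $$T_{d+m}(\mathbf{y}_*-\boldsymbol{\xi}_*;\boldsymbol{\Omega}_*,\nu)=T_d(\mathbf{y}-\boldsymbol{\xi};\boldsymbol{\Omega},\nu)\,T_m(\mathbf{0};\bar{\boldsymbol{\Gamma}},\nu).$$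
   Context: $T_k(\mathbf{x};\boldsymbol{\Sigma},\nu)$ denotes the cumulative distribution function, evaluated at $\mathbf{x}\in\mathbb{R}^k$, of the $k$-dimensional Student $t$ distribution with location $\mathbf{0}$, positive definite dispersion matrix $\boldsymbol{\Sigma}$ and $\nu$ degrees of freedom (i.e. of $V^{-1/2}\mathbf{X}$ with $\mathbf{X}\sim\mathcal{N}_k(\mathbf{0},\boldsymbol{\Sigma})$ independent of $V\sim\mathrm{Gamma}(\nu/2,\nu/2)$). *)

From HB Require Import structures.
From mathcomp Require Import all_boot all_order all_algebra.
From mathcomp Require Import all_classical all_reals all_analysis.
Set Implicit Arguments. Unset Strict Implicit. Unset Printing Implicit Defensive.
Import Order.TTheory GRing.Theory Num.Theory.
Import numFieldNormedType.Exports.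
Local Open Scope classical_set_scope.
Local Open Scope ring_scope.

Section Defs.
Variable R : realType.

Definition posdef (n : nat) (A : 'M[R]_n) : Prop :=
  A^T = A /\ forall x : 'rV[R]_n, x != 0 -> 0 < (x *m A *m x^T) 0 0.

Definition corrmat (n : nat) (A : 'M[R]_n) : Prop :=
  posdef A /\ forall i : 'I_n, A i i = 1.

(* iterated Lebesgue integral of a nonnegative f over B 0 x ... x B (k-1):
   coordinate k-1 is outermost; coordinates are stored as functions nat -> R *)
Fixpoint iint (k : nat) (B : nat -> set R) (f : (nat -> R) -> \bar R) : \bar R :=
  match k with
  | 0 => f (fun _ => 0)
  | k'.+1 => (\int[lebesgue_measure]_(t in B k')
                iint k' B (fun z => f (fun i => if i == k' then t else z i)))%E
  end.

Definition vec_of (k : nat) (z : nat -> R) : 'rV[R]_k := \row_(i < k) z i.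

Definition gauss_kernel (k : nat) (S : 'M[R]_k) (z : nat -> R) : \bar R :=
  (expR (- ((vec_of k z *m invmx S *m (vec_of k z)^T) 0 0) / 2))%:E.

Definition coord (k : nat) (x : 'rV[R]_k) (i : nat) : R :=
  oapp (fun j : 'I_k => x 0 j) 0 (insub i).

Definition Phi (k : nat) (S : 'M[R]_k) (x : 'rV[R]_k) : R :=
  fine (iint k (fun i => `]-oo, coord x i]%classic) (gauss_kernel S)) /
  fine (iint k (fun _ => setT) (gauss_kernel S)).

Definition gamma_kernel (nu v : R) : R := v `^ (nu / 2 - 1) * expR (- (nu * v) / 2).

(* T_k(x; S, nu) = P(V^{-1/2} X <= x) = E[ Phi_k(sqrt V * x; S) ],
   X ~ N_k(0,S) independent of V ~ Gamma(nu/2, nu/2) *)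
Definition tcdf (k : nat) (x : 'rV[R]_k) (S : 'M[R]_k) (nu : R) : R :=
  fine (\int[lebesgue_measure]_(v in `]0%R, +oo[%classic)
          ((gamma_kernel nu v * Phi S (Num.sqrt v *: x))%:E))%E /
  fine (\int[lebesgue_measure]_(v in `]0%R, +oo[%classic) (gamma_kernel nu v)%:E)%E.

End Defs.

(* The dispersion matrix diag(G, O) has the block-diagonal inverse diag(G^-1, O^-1),
   so the Gaussian kernel on R^(m+k) is the product of the kernels on R^m and R^k,
   and splitting the iterated integral that defines the normal CDF gives
   Phi((v, w); diag(G, O)) = Phi(v; G) Phi(w; O).  In the Student mixture the first
   argument is 0, which is fixed by the scaling sqrt(V), so the factor Phi(0; G) is
   constant in V and leaves the V-integral; the same computation identifies it with
   T(0; G, nu). *)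

From Pilot Require Import Defs.
From HB Require Import structures.
From mathcomp Require Import all_boot all_order all_algebra.
From mathcomp Require Import all_classical all_reals all_analysis.
From mathcomp Require Import zify.
Set Implicit Arguments. Unset Strict Implicit. Unset Printing Implicit Defensive.
Import Order.TTheory GRing.Theory Num.Theory.
Local Open Scope classical_set_scope.
Local Open Scope ring_scope.

Section ge0_integralZl_EFin_nonmeasurable.
Local Open Scope ereal_scope.
Context d (T : measurableType d) (R : realType).
Variable mu : {measure set T -> \bar R}.
Import HBNNSimple.

(* [ge0_integralE] unfolds a nonnegative integral to this supremum. *)
Let nnint (f : T -> \bar R) := ereal_sup [set sintegral mu h |
  h in [set h : {nnsfun T >-> R} | forall x, (h x)%:E <= f x]].

Let nnintZl_le (k : R) (f : T -> \bar R) : (0 < k)%R ->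
  nnint (fun x => k%:E * f x) <= k%:E * nnint f.
Proof.
move=> k0; apply: ge_ereal_sup => _ [h hle <-].
have ki : (0 <= k^-1)%R by rewrite invr_ge0 ltW.
pose h' := scale_nnsfun h ki.
have -> : sintegral mu h = k%:E * sintegral mu h'.
  by rewrite sintegralrM muleA -EFinM divff ?gt_eqF// mul1e.
apply: lee_wpmul2l; first by rewrite lee_fin ltW.
apply: ereal_sup_ubound; exists h' => //= x.
by rewrite EFinM lee_pdivrMl //; exact: hle.
Qed.

(* Unlike [ge0_integralZl_EFin], [f] need not be measurable: this is what allows
   integrands that are themselves integrals, as in [iint]. *)
Lemma ge0_integralZl_EFin_nonmeasurable (D : set T) (f : T -> \bar R) (k : R) :
  (0 <= k)%R -> (forall x, D x -> 0 <= f x) ->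
  \int[mu]_(x in D) (k%:E * f x) = k%:E * \int[mu]_(x in D) f x.
Proof.
move=> k0 f0; have [->|kN0] := eqVneq k 0%R.
  by rewrite mul0e integral0_eq // => x _; rewrite mul0e.
have kp : (0 < k)%R by rewrite lt_def kN0.
rewrite !ge0_integralE //; last by move=> x Dx; rewrite mule_ge0 ?lee_fin ?f0.
rewrite erestrict_scale; apply/eqP; rewrite eq_le nnintZl_le //=.
have kVp : (0 < k^-1)%R by rewrite invr_gt0.
rewrite -lee_pdivlMl //.
have {1}-> : f \_ D = fun x => k^-1%:E * (k%:E * (f \_ D) x).
  by apply/funext => x; rewrite muleA -EFinM mulVf ?gt_eqF // mul1e.
exact: nnintZl_le.
Qed.

End ge0_integralZl_EFin_nonmeasurable.

Lemma fine_EFinMl (R : realType) (r : R) (x : \bar R) :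
  fine (r%:E * x)%E = r * fine x.
Proof.
by case: x => [s||] //=; rewrite mulr0 (mulry, mulrNy);
  case: sgrP; rewrite ?mul0e ?mul1e ?mulN1e.
Qed.

Section iterated_integral.
Variable R : realType.
Implicit Types (B : nat -> set R) (f : (nat -> R) -> \bar R).
Local Open Scope ereal_scope.

Definition trunc (k : nat) (z : nat -> R) : nat -> R :=
  fun i => if (i < k)%N then z i else 0%R.

Definition glue (m : nat) (z u : nat -> R) : nat -> R :=
  fun i => if (i < m)%N then z i else u (i - m)%N.

Lemma iint_trunc k B f : iint k B f = iint k B (f \o trunc k).
Proof.
elim: k f => [|k IH] f /=.
  by congr f; apply/funext => i; rewrite /trunc ltn0.
apply: eq_integral => t _; rewrite IH [in RHS]IH; congr iint.
apply/funext => z /=; congr f; apply/funext => i; rewrite /trunc.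
by case: ltngtP => [ik|ik|->]; rewrite ?ltnS ?if_same ?leqnn // (ltnW ik).
Qed.

Lemma iint_glue m k B f :
  iint (m + k) B f =
  iint k (fun i => B (m + i)%N) (fun u => iint m B (fun z => f (glue m z u))).
Proof.
elim: k f => [|k IH] f.
  by rewrite addn0 /= iint_trunc.
rewrite addnS /=; apply: eq_integral => t _; rewrite IH; congr iint.
apply/funext => u; congr iint; apply/funext => z; congr f.
apply/funext => i; rewrite /glue.
have [im|mi] := ltnP i m; first by rewrite ifF //; apply/eqP; lia.
by rewrite (_ : (i == m + k)%N = ((i - m)%N == k)) //; apply/eqP/eqP; lia.
Qed.

Lemma iint_ge0 k B f : (forall z, 0 <= f z) -> 0 <= iint k B f.
Proof.
by elim: k f => [|k IH] f f0 //=; apply: integral_ge0 => t _; exact: IH.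
Qed.

Lemma iintZl k B f (c : R) : (0 <= c)%R -> (forall z, 0 <= f z) ->
  iint k B (fun z => c%:E * f z) = c%:E * iint k B f.
Proof.
move=> c0; elim: k f => [|k IH] f f0 //=.
under eq_integral do rewrite IH //.
by rewrite ge0_integralZl_EFin_nonmeasurable // => t _; exact: iint_ge0.
Qed.

Lemma eq_iint_dom k B B' f :
  (forall i, (i < k)%N -> B i = B' i) -> iint k B f = iint k B' f.
Proof.
elim: k f => [|k IH] f BB' //=; rewrite BB' //.
by apply: eq_integral => t _; apply: IH => i ik; apply: BB'; lia.
Qed.

Lemma iint_pinfty k B :
  (forall i, (i < k)%N -> measurable (B i) /\ 0 < lebesgue_measure (B i)) ->
  iint k B (fun _ => +oo) = +oo.
Proof.
elim: k => [|k IH] BP //=.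
rewrite IH; last by move=> i ik; apply: BP; lia.
have [mB B0] := BP k (ltnSn k).
by rewrite integral_cst // gt0_mulye.
Qed.

(* [c] may be [+oo]: then both sides are [0], since [fine +oo = 0] and the
   integrand is [+oo] on a product of sets of positive measure. *)
Lemma fine_iintMl k B f (c : \bar R) : 0 <= c -> (forall z, 0 < f z) ->
  (forall i, (i < k)%N -> measurable (B i) /\ 0 < lebesgue_measure (B i)) ->
  fine (iint k B (fun z => c * f z)) = (fine c * fine (iint k B f))%R.
Proof.
case: c => [r| |] //= r0 f0 BP; rewrite ?mul0r.
  by rewrite iintZl ?fine_EFinMl // => z; rewrite ltW.
by under eq_fun do rewrite gt0_mulye //; rewrite iint_pinfty.
Qed.

End iterated_integral.

Section coord.
Variable R : realType.

Lemma coord_ord n (x : 'rV[R]_n) (j : 'I_n) : Defs.coord x j = x 0 j.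
Proof. by rewrite /Defs.coord valK. Qed.

Lemma coord_out n (x : 'rV[R]_n) i : (n <= i)%N -> Defs.coord x i = 0.
Proof. by move=> ni; rewrite /Defs.coord insubF // ltnNge ni. Qed.

Lemma coord_row_mx_l m k (v : 'rV[R]_m) (w : 'rV[R]_k) i :
  (i < m)%N -> Defs.coord (row_mx v w) i = Defs.coord v i.
Proof.
move=> im; pose j := Ordinal im.
by rewrite -[i]/(val (lshift k j)) coord_ord row_mxEl -coord_ord.
Qed.

Lemma coord_row_mx_r m k (v : 'rV[R]_m) (w : 'rV[R]_k) i :
  Defs.coord (row_mx v w) (m + i) = Defs.coord w i.
Proof.
have [ik|ki] := ltnP i k; last by rewrite !coord_out // leq_add2l.
pose j := Ordinal ik.
by rewrite -[i]/(val j) -[(m + j)%N]/(val (rshift m j)) coord_ord row_mxEr -coord_ord.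
Qed.

End coord.

Section gaussian_kernel.
Variable R : realType.

Lemma posdef_unitmx n (A : 'M[R]_n) : posdef A -> A \in unitmx.
Proof.
move=> [_ Apos]; rewrite unitmxE unitfE; apply/negP => /det0P [v v0 vA].
by have := Apos v v0; rewrite vA mul0mx mxE ltxx.
Qed.

Lemma vec_of_glue m k (z u : nat -> R) :
  vec_of (m + k) (glue m z u) = row_mx (vec_of m z) (vec_of k u).
Proof.
apply/rowP => j; rewrite !mxE; case: splitP => [j' ->|j' ->]; rewrite !mxE /glue.
  by rewrite ltn_ord.
by rewrite ltnNge leq_addr addKn.
Qed.

Lemma quad_form_block_diag m k (a : 'rV[R]_m) (b : 'rV[R]_k) P Q :
  (row_mx a b *m block_mx P 0 0 Q *m (row_mx a b)^T) 0 0 =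
  (a *m P *m a^T) 0 0 + (b *m Q *m b^T) 0 0.
Proof.
by rewrite mul_row_block !mulmx0 addr0 add0r tr_row_mx mul_row_col mxE.
Qed.

Lemma gauss_kernel_gt0 n (S : 'M[R]_n) z : (0 < gauss_kernel S z)%E.
Proof. by rewrite lte_fin expR_gt0. Qed.

Lemma gauss_kernel_block_diag m k (G : 'M[R]_m) (O : 'M[R]_k) z u :
  G \in unitmx -> O \in unitmx ->
  gauss_kernel (block_mx G 0 0 O) (glue m z u) =
  (gauss_kernel G z * gauss_kernel O u)%E.
Proof.
move=> Gu Ou; rewrite /gauss_kernel vec_of_glue invmx_block_diag; last first.
  by rewrite block_diag_mx_unit Gu Ou.
by rewrite quad_form_block_diag -EFinM -expRD opprD mulrDl.
Qed.

Lemma iint_gauss_kernel_block_diag m k (G : 'M[R]_m) (O : 'M[R]_k) B :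
  G \in unitmx -> O \in unitmx ->
  iint (m + k) B (gauss_kernel (block_mx G 0 0 O)) =
  iint k (fun i => B (m + i)%N)
    (fun u => iint m B (gauss_kernel G) * gauss_kernel O u)%E.
Proof.
move=> Gu Ou; rewrite iint_glue; congr iint; apply/funext => u.
under eq_fun do rewrite gauss_kernel_block_diag // muleC.
rewrite -[gauss_kernel O u]fineK ?iintZl 1?muleC //.
- by rewrite fine_ge0 // ltW // gauss_kernel_gt0.
- by move=> z; rewrite ltW // gauss_kernel_gt0.
Qed.

End gaussian_kernel.

Section gaussian_cdf.
Variable R : realType.
Local Open Scope ereal_scope.

Let itvNy_measurable_gt0 (a : R) :
  measurable `]-oo, a] /\ 0 < lebesgue_measure `]-oo, a].
Proof. by split=> //; rewrite lebesgue_measure_itv /= ltNyr /= ltry. Qed.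

Let setT_measurable_gt0 :
  measurable (setT : set R) /\ 0 < lebesgue_measure (setT : set R).
Proof.
by split=> //; rewrite -set_itvNyy lebesgue_measure_itv /= ltry.
Qed.

Lemma Phi_ge0 n (S : 'M[R]_n) x : (0 <= Phi S x)%R.
Proof.
by rewrite divr_ge0 // fine_ge0 // iint_ge0 // => z; rewrite ltW // gauss_kernel_gt0.
Qed.

Lemma Phi_block_diag m k (G : 'M[R]_m) (O : 'M[R]_k) v w :
  G \in unitmx -> O \in unitmx ->
  Phi (block_mx G 0 0 O) (row_mx v w) = (Phi G v * Phi O w)%R.
Proof.
move=> Gu Ou; rewrite /Phi !iint_gauss_kernel_block_diag //.
have K0 B n (S : 'M[R]_n) : 0 <= iint n B (gauss_kernel S).
  by apply: iint_ge0 => z; rewrite ltW // gauss_kernel_gt0.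
rewrite !fine_iintMl //; try exact: gauss_kernel_gt0.
rewrite (@eq_iint_dom _ m _ (fun i => `]-oo, Defs.coord v i]%classic)); last first.
  by move=> i im; rewrite coord_row_mx_l.
under [X in iint k X]eq_fun do rewrite coord_row_mx_r.
by rewrite invfM mulrACA.
Qed.

End gaussian_cdf.

Lemma gamma_kernel_ge0 (R : realType) (nu v : R) : 0 <= gamma_kernel nu v.
Proof. by rewrite mulr_ge0 ?powR_ge0 ?expR_ge0. Qed.

Lemma tcdf_block_diag (R : realType) m k (G : 'M[R]_m) (O : 'M[R]_k) w nu :
  G \in unitmx -> O \in unitmx ->
  tcdf (row_mx 0 w) (block_mx G 0 0 O) nu = tcdf w O nu * tcdf 0 G nu.
Proof.
move=> Gu Ou; rewrite /tcdf.
have c0 : 0 <= Phi G 0 := Phi_ge0 G 0.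
under eq_integral do rewrite scale_row_mx scaler0 Phi_block_diag // mulrCA EFinM.
under [X in _ = _ * (fine X / _)]eq_integral do rewrite scaler0 mulrC EFinM.
rewrite !ge0_integralZl_EFin_nonmeasurable ?fine_EFinMl //; first last.
- by move=> v _; rewrite lee_fin mulr_ge0 ?gamma_kernel_ge0 ?Phi_ge0.
- by move=> v _; rewrite lee_fin gamma_kernel_ge0.
set F := fine (\int[_]_(_ in _) (gamma_kernel nu _)%:E); clearbody F.
have [->|F0] := eqVneq F 0; first by rewrite invr0 !mulr0.
by rewrite mulfK // -mulrA mulrC.
Qed.

Theorem lemma2 (R : realType) (d m : nat) (nu : R)
    (xi y : 'rV[R]_d) (Om : 'M[R]_d) (Gb : 'M[R]_m) :
  (0 < d)%N -> (0 < m)%N -> 0 < nu -> posdef Om -> corrmat Gb ->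
  tcdf (row_mx (0 : 'rV[R]_m) y - row_mx (0 : 'rV[R]_m) xi)
       (block_mx Gb 0 0 Om) nu
  = tcdf (y - xi) Om nu * tcdf (0 : 'rV[R]_m) Gb nu.
Proof.
move=> _ _ _ /posdef_unitmx Omu [/posdef_unitmx Gbu _].
by rewrite opp_row_mx add_row_mx subr0 tcdf_block_diag.
Qed.
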